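(* Consider the Markov process described in the context with $K=1$, satisfying Assumption (A) and the ergodicity condition (E). For each $x\in\{-1,1\}^c$ let $\beta_{0,x}\in(0,1)$ be a root of $(\mathrm E_x)$, and for $i=1,\dots,c$ let \[\beta_{i,x}=\frac{F_i(\beta_{0,x})+x_iR_i(\beta_{0,x})}{2D_i(\beta_{0,x})}.\] Then the $2^c$ functions $W\ni\mathbf n\mapsto \beta_{0,x}^{n_0}\beta_{1,x}^{n_1}\cdots\beta_{c,x}^{n_c}$, $x\in\{-1,1\}^c$, are linearly independent on $W$.
   Context: Fix integers $c\ge 1$ and $K\ge1$ (in the claim $K=1$). Consider an irreducible continuous-time Markov process on $V\cup W$, where $V$ is finite and $W=\{\mathbf n=(n_0,\dots,n_c): n_0\in\{0,1,\dots\},\ n_i\in\{0,1\}\}$. For each $i\in\{1,\dots,c\}$ and integer $k\le K$ there are nonnegative rates $a_{k,i},b_{k,i},c_{k,i},d_{k,i}$. From $\mathbf n\in W$, for each $i$ and $k\in\{-n_0,\dots,K\}$, the process jumps (changing only coordinates $0$ and $i$) from $(n_0,n_i)=(n_0,0)$ to $(n_0+k,1)$ at rate $a_{k,i}$ and to $(n_0+k,0)$ at rate $b_{k,i}$, and from $(n_0,1)$ to $(n_0+k,1)$ at rate $c_{k,i}$ and to $(n_0+k,0)$ at rate $d_{k,i}$; from $\mathbf n$ it jumps into $V$ with total rate $\sum_i\sum_{k\le -n_0-1}((1-n_i)(a_{k,i}+b_{k,i})+n_i(c_{k,i}+d_{k,i}))$; no other transitions leave $W$, and from $V$ no transitions go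 to states with $n_0\ge K$. Let $A_i(z)=\sum_{k=-\infty}^K a_{k,i}z^{K-k}$ and similarly $B_i,C_i,D_i$ with $b,c,d$. Assumption (A): for each $i$: (i) $A_i(1),B_i(1),C_i(1),D_i(1)<\infty$; (ii) $A_i(1),D_i(1)>0$; (iii) $A_i'(1),B_i'(1),C_i'(1),D_i'(1)<\infty$; (iv) $a_{K,i}=0$ or $d_{K,i}=0$; (v) $b_{K,i}=c_{K,i}\ne0$. Ergodicity condition (E): $0<\sum_{i=1}^c\frac{1}{A_i(1)+D_i(1)}\bigl(D_i(1)(A_i'(1)-KA_i(1)+B_i'(1)-KB_i(1))+A_i(1)(C_i'(1)-KC_i(1)+D_i'(1)-KD_i(1))\bigr)$. Let $F_i(z)=z^K(A_i(1)+B_i(1)-C_i(1)-D_i(1))-B_i(z)+C_i(z)$. For real $\beta_0\in[0,1]$ let $R_i(\beta_0)=\sqrt{F_i(\beta_0)^2+4A_i(\beta_0)D_i(\beta_0)}$ (nonnegative square root). For $x\in\{-1,1\}^c$, equation $(\mathrm E_x)$ in the unknown $\beta_0$ is \[0=\sum_{i=1}^c\Bigl(x_iR_i(\beta_0)+B_i(\beta_0)+C_i(\beta_0)-\beta_0^K\bigl(A_i(1)+B_i(1)+C_i(1)+D_i(1)\bigr)\Bigr).\] *)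

From HB Require Import structures.
From mathcomp Require Import all_boot all_order all_algebra.
From mathcomp Require Import all_classical all_reals all_analysis.
Set Implicit Arguments. Unset Strict Implicit. Unset Printing Implicit Defensive.
Import Order.TTheory GRing.Theory Num.Theory.
Import numFieldNormedType.Exports.
Local Open Scope ring_scope.

(* Rates: r : int -> R gives r_k for integer k <= K (values for k > K unused).
   Coefficient of z^m in the generating function is r_(K-m). *)
Definition gcoef {R : realType} (K : nat) (r : int -> R) (m : nat) : R :=
  r (K%:Z - m%:Z).

Definition genf {R : realType} (K : nat) (r : int -> R) (z : R) : R :=
  limn (series (fun m => gcoef K r m * z ^+ m)).

Definition genf_fin1 {R : realType} (K : nat) (r : int -> R) : Prop :=
  cvgn (series (fun m => gcoef K r m)).

Definition genf_d1 {R : realType} (K : nat) (r : int -> R) : R :=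
  limn (series (fun m => m%:R * gcoef K r m)).

Definition genf_d1_fin {R : realType} (K : nat) (r : int -> R) : Prop :=
  cvgn (series (fun m => m%:R * gcoef K r m)).

Section Model.
Variables (R : realType) (c K : nat).
Variables (a b cr d : 'I_c -> int -> R).

Definition Agf i := genf K (a i).
Definition Bgf i := genf K (b i).
Definition Cgf i := genf K (cr i).
Definition Dgf i := genf K (d i).

Definition rates_nonneg : Prop :=
  forall i (k : int), k <= K%:Z ->
    0 <= a i k /\ 0 <= b i k /\ 0 <= cr i k /\ 0 <= d i k.

Definition assumptionA : Prop :=
  forall i : 'I_c,
    [/\ genf_fin1 K (a i) /\ genf_fin1 K (b i) /\ genf_fin1 K (cr i) /\ genf_fin1 K (d i),
        0 < Agf i 1 /\ 0 < Dgf i 1,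
        genf_d1_fin K (a i) /\ genf_d1_fin K (b i) /\ genf_d1_fin K (cr i) /\ genf_d1_fin K (d i),
        a i K%:Z = 0 \/ d i K%:Z = 0
      & b i K%:Z = cr i K%:Z /\ b i K%:Z != 0].

Definition ergodicityE : Prop :=
  0 < \sum_(i < c) (Agf i 1 + Dgf i 1)^-1 *
        (Dgf i 1 * (genf_d1 K (a i) - K%:R * Agf i 1 + genf_d1 K (b i) - K%:R * Bgf i 1)
         + Agf i 1 * (genf_d1 K (cr i) - K%:R * Cgf i 1 + genf_d1 K (d i) - K%:R * Dgf i 1)).

Definition Ffun i (z : R) : R :=
  z ^+ K * (Agf i 1 + Bgf i 1 - Cgf i 1 - Dgf i 1) - Bgf i z + Cgf i z.

Definition Rfun i (z : R) : R :=
  Num.sqrt (Ffun i z ^+ 2 + 4 * Agf i z * Dgf i z).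

Definition sgnb (s : bool) : R := if s then 1 else -1.

Definition Ex_rhs (x : {ffun 'I_c -> bool}) (z : R) : R :=
  \sum_(i < c) (sgnb (x i) * Rfun i z + Bgf i z + Cgf i z
                - z ^+ K * (Agf i 1 + Bgf i 1 + Cgf i 1 + Dgf i 1)).

Definition beta_i (x : {ffun 'I_c -> bool}) (beta0 : R) (i : 'I_c) : R :=
  (Ffun i beta0 + sgnb (x i) * Rfun i beta0) / (2 * Dgf i beta0).

End Model.

From HB Require Import structures.
From mathcomp Require Import all_boot all_order all_algebra.
From mathcomp Require Import all_classical all_reals all_analysis.
From mathcomp Require Import ring lra.
Set Implicit Arguments. Unset Strict Implicit. Unset Printing Implicit Defensive.
Import Order.TTheory GRing.Theory Num.Theory.
Import numFieldNormedType.Exports.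
Local Open Scope ring_scope.

(* For fixed x the signs x_i only pick one of the two roots (F_i +- R_i)/(2 D_i)
   at beta_(0,x); these differ since R_i > 0, as A_i and D_i have nonnegative
   coefficients and are positive at 1, hence on (0,1]. Given a vanishing
   combination sum_x gamma_x beta_(0,x)^n0 prod_i beta_(i,x)^(n_i), the sum
   sum_x gamma_x p(beta_(0,x)) prod_i (beta_(i,x) - w_i) vanishes too, being a
   linear combination of such sums; taking p with roots at every
   beta_(0,y) <> beta_(0,x) and w_i the root not selected by x_i kills every
   term but the x-th. *)

Section PowerSeries.
Variable R : realType.

Lemma series_coef_gt0 (q : nat -> R) :
  (forall m, 0 <= q m) -> 0 < limn (series q) -> exists m, 0 < q m.
Proof.
move=> q_ge0; apply: contraPP => /forallNP q_le0.
have -> : series q = (fun=> 0 : R).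
  apply/funext => n; rewrite /series /= big1 // => m _.
  by apply/eqP; rewrite eq_le q_ge0 andbT leNgt; apply/negP/q_le0.
by rewrite lim_cst ?ltxx //; exact: norm_hausdorff.
Qed.

Lemma series_pow_gt0 (q : nat -> R) (z : R) :
  (forall m, 0 <= q m) -> cvgn (series q) -> 0 < limn (series q) ->
  0 < z <= 1 -> 0 < limn (series (fun m => q m * z ^+ m)).
Proof.
move=> q_ge0 q_cvg q_gt0 /andP[z_gt0 z_le1].
have [m qm_gt0] := series_coef_gt0 q_ge0 q_gt0.
have t_ge0 k : 0 <= q k * z ^+ k by rewrite mulr_ge0 // exprn_ge0 // ltW.
have t_cvg : cvgn (series (fun m => q m * z ^+ m)).
  apply: (series_le_cvg t_ge0 q_ge0 _ q_cvg) => k.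
  by rewrite ler_piMr // exprn_ile1 // ltW.
apply: (lt_le_trans _ (nondecreasing_cvgn_le _ t_cvg m.+1)); last first.
  exact: nondecreasing_series.
rewrite /series /= big_nat_recr //=; apply: ltr_wpDl.
  by apply: sumr_ge0 => k _.
by rewrite mulr_gt0 // exprn_gt0.
Qed.

Lemma genf_gt0 (K : nat) (r : int -> R) (z : R) :
  (forall k : int, k <= K%:Z -> 0 <= r k) -> genf_fin1 K r -> 0 < genf K r 1 ->
  0 < z <= 1 -> 0 < genf K r z.
Proof.
move=> r_ge0 r_fin r1_gt0; apply: series_pow_gt0 => //.
  by move=> m; apply: r_ge0; rewrite gerBl.
by move: r1_gt0; rewrite /genf; under eq_fun do rewrite expr1n mulr1.
Qed.

End PowerSeries.

Section Roots.
Variables (R : realType) (c K : nat) (a b cr d : 'I_c -> int -> R).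

Lemma Rfun_gt0 i z :
  0 < Agf K a i z -> 0 < Dgf K d i z -> 0 < Rfun K a b cr d i z.
Proof.
move=> A_gt0 D_gt0; rewrite /Rfun sqrtr_gt0 ltr_wpDl ?sqr_ge0 //.
by rewrite !mulr_gt0.
Qed.

Lemma beta_iE (x : {ffun 'I_c -> bool}) z i :
  beta_i K a b cr d x z i = beta_i K a b cr d [ffun=> x i] z i.
Proof. by rewrite /beta_i ffunE. Qed.

Lemma beta_i_sign_neq (x y : {ffun 'I_c -> bool}) z i :
  0 < Agf K a i z -> 0 < Dgf K d i z -> x i != y i ->
  beta_i K a b cr d x z i != beta_i K a b cr d y z i.
Proof.
move=> A_gt0 D_gt0 xy; have R_gt0 := Rfun_gt0 A_gt0 D_gt0.
apply/eqP => /(congr1 (fun t => t * (2 * Dgf K d i z))) /=.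
rewrite !divfK ?mulf_neq0 ?gt_eqF // /sgnb.
by case: (x i) (y i) xy => [] [] //= _; lra.
Qed.

End Roots.

Lemma prod_subr_sum_ffun (R : comPzRingType) (c : nat) (v w : 'I_c -> R) :
  \prod_(i < c) (v i - w i) =
  \sum_(f : {ffun 'I_c -> bool})
     (\prod_(i < c) (if f i then 1 else - w i)) * \prod_(i < c) v i ^+ f i.
Proof.
rewrite (eq_bigr (fun i => \sum_(s : bool) (if s then 1 else - w i) * v i ^+ s)).
  by rewrite bigA_distr_bigA; apply: eq_bigr => f _; rewrite -big_split.
by move=> i _; rewrite big_bool /= mul1r expr1 expr0 mulr1 addrC.
Qed.

Section ExpMonomialIndependence.
Variables (R : idomainType) (c : nat).
Local Notation X := {ffun 'I_c -> bool}.
Variables (u : X -> R) (V : R -> bool -> 'I_c -> R) (gamma : X -> R).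

Hypothesis gamma_moments : forall (n0 : nat) (n : X),
  \sum_(x : X) gamma x * (u x ^+ n0 * \prod_(i < c) V (u x) (x i) i ^+ n i) = 0.

Lemma sum_horner_prod_subr_eq0 (p : {poly R}) (w : 'I_c -> R) :
  \sum_(x : X) gamma x * (p.[u x] * \prod_(i < c) (V (u x) (x i) i - w i)) = 0.
Proof.
under eq_bigr => x _ do
  rewrite prod_subr_sum_ffun horner_coef big_distrl /= big_distrr /=.
under eq_bigr => x _ do under eq_bigr => k _ do rewrite !big_distrr /=.
rewrite exchange_big /=; apply: big1 => k _.
rewrite exchange_big /=; apply: big1 => f _.
transitivity (p`_k * \prod_(i < c) (if f i then 1 else - w i) *
  \sum_(x : X) gamma x * (u x ^+ k * \prod_(i < c) V (u x) (x i) i ^+ f i));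
  last by rewrite gamma_moments mulr0.
by rewrite big_distrr /=; apply: eq_bigr => x _; ring.
Qed.

Hypothesis V_sign_neq : forall x i, V (u x) true i != V (u x) false i.

Lemma exp_monomial_coef_eq0 x : gamma x = 0.
Proof.
pose p := \prod_(y : X | u y != u x) ('X - (u y)%:P).
pose w i := V (u x) (~~ x i) i.
have others_vanish y : y != x ->
    p.[u y] * \prod_(i < c) (V (u y) (y i) i - w i) = 0.
  move=> yx; have [uyx|uyx] := eqVneq (u y) (u x); last first.
    by rewrite /p horner_prod (bigD1 y) //= hornerXsubC subrr !mul0r.
  have [i yi] : exists i, y i != x i.
    apply/existsP; rewrite -negb_forall; apply: contra yx => /forallP yx.
    by apply/eqP/ffunP => j; apply/eqP.
  have yi_flip : y i = ~~ x i by case: (y i) (x i) yi => [] [].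
  by rewrite (bigD1 i) //= /w uyx yi_flip subrr mul0r mulr0.
have x_survives : p.[u x] * \prod_(i < c) (V (u x) (x i) i - w i) != 0.
  rewrite mulf_neq0 //.
    rewrite /p horner_prod; apply/prodf_neq0 => y uyx.
    by rewrite hornerXsubC subr_eq0 eq_sym.
  apply/prodf_neq0 => i _; rewrite subr_eq0 /w.
  by case: (x i); rewrite //= eq_sym.
have := sum_horner_prod_subr_eq0 p w.
rewrite (bigD1 x) //= [X in _ + X]big1 => [|y yx]; last first.
  by rewrite others_vanish ?mulr0.
by rewrite addr0 => /eqP; rewrite mulf_eq0 (negPf x_survives) orbF => /eqP.
Qed.

End ExpMonomialIndependence.

Theorem lemma4 (R : realType) (c : nat) (hc : (1 <= c)%N)
    (a b cr d : 'I_c -> int -> R)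
    (hnn : rates_nonneg 1 a b cr d)
    (hA : assumptionA 1 a b cr d)
    (hE : ergodicityE 1 a b cr d)
    (beta0 : {ffun 'I_c -> bool} -> R)
    (hbeta0 : forall x, 0 < beta0 x < 1)
    (hroot : forall x, Ex_rhs 1 a b cr d x (beta0 x) = 0) :
  forall gamma : {ffun 'I_c -> bool} -> R,
    (forall (n0 : nat) (n : {ffun 'I_c -> bool}),
        \sum_(x : {ffun 'I_c -> bool})
           gamma x * (beta0 x ^+ n0 *
                      \prod_(i < c) beta_i 1 a b cr d x (beta0 x) i ^+ (n i : nat)) = 0) ->
    forall x, gamma x = 0.
Proof.
move=> gamma gamma_moments.
have AD_gt0 y i : 0 < Agf 1 a i (beta0 y) /\ 0 < Dgf 1 d i (beta0 y).
  have [[a_fin [_ [_ d_fin]]] [a1_gt0 d1_gt0] _ _ _] := hA i.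
  have beta0_01 : 0 < beta0 y <= 1 by have /andP[-> /ltW] := hbeta0 y.
  by split; apply: genf_gt0 => // k /(hnn i) [? [? [? ?]]].
apply: (exp_monomial_coef_eq0 (u := beta0)
          (V := fun z s i => beta_i 1 a b cr d [ffun=> s] z i)).
  move=> n0 n; rewrite -[RHS](gamma_moments n0 n); apply: eq_bigr => y _.
  by under [in RHS]eq_bigr => i _ do rewrite beta_iE.
move=> y i; have [A_gt0 D_gt0] := AD_gt0 y i.
by apply: beta_i_sign_neq; rewrite ?ffunE.
Qed.
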